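(* For $n\ge1$ let $Z_n$ be the balanced Thick-$\mathcal{Z}$ graph with $|U_1|=|V_1|=|U_2|=|V_2|=n$. When the edges of $Z_n$ are revealed one by one in a uniformly random order to the greedy algorithm, the expected size of the resulting matching is $\left(\frac12+o(1)\right)|\textsc{OPT}|$ as $n\to\infty$, where $\textsc{OPT}$ is a maximum matching of $Z_n$.
   Context: A Thick-$\mathcal{Z}$ graph is a bipartite graph with sides $U_1\cup U_2$ and $V_1\cup V_2$ (disjoint sets), $|U_1|=|V_1|$, $|U_2|=|V_2|$, whose edge set is the union of a perfect matching between $U_1$ and $V_1$, a perfect matching between $U_2$ and $V_2$, and the complete bipartite graph between $U_2$ and $V_1$; it is balanced if additionally $|U_1|=|V_2|$. The greedy algorithm adds an arriving edge whenever the current set plus that edge is a matching. *)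

From HB Require Import structures.
From mathcomp Require Import all_boot all_order all_algebra.
From mathcomp Require Import all_classical all_reals all_analysis.
Set Implicit Arguments. Unset Strict Implicit. Unset Printing Implicit Defensive.
Import Order.TTheory GRing.Theory Num.Theory.

(* Vertices on each side: ('I_2 * 'I_n).  Left side: (0,i) in U_1, (1,i) in U_2.
   Right side: (0,i) in V_1, (1,i) in V_2.  An edge is a pair (left, right). *)
Definition vtx (n : nat) := ('I_2 * 'I_n)%type.
Definition edge (n : nat) := (vtx n * vtx n)%type.

(* Balanced Thick-Z graph Z_n: perfect matching U_1-V_1 (u_i v_i), perfect
   matching U_2-V_2 (u'_i v'_i), and complete bipartite U_2 x V_1. *)
Definition Zedge (n : nat) (e : edge n) : bool :=
  let: ((a, i), (b, j)) := e in
  [|| (nat_of_ord a == 0) && (nat_of_ord b == 0) && (i == j),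
      (nat_of_ord a == 1) && (nat_of_ord b == 1) && (i == j)
    | (nat_of_ord a == 1) && (nat_of_ord b == 0)].

Definition Zedges (n : nat) : {set edge n} := [set e | Zedge e].

Definition is_matching n (M : {set edge n}) : bool :=
  [forall e1 in M, forall e2 in M, (e1 != e2) ==> ((e1.1 != e2.1) && (e1.2 != e2.2))].

Definition opt_size (n : nat) : nat :=
  \max_(M : {set edge n} | (M \subset Zedges n) && is_matching M) #|M|.

Definition greedy_step n (M : {set edge n}) (e : edge n) : {set edge n} :=
  if is_matching (e |: M) then e |: M else M.

Definition greedy n (s : seq (edge n)) : {set edge n} := foldl (@greedy_step n) finset.set0 s.

Definition orders (n : nat) : seq (seq (edge n)) := permutations (enum (Zedges n)).

Definition expected_greedy (R : realType) (n : nat) : R :=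
  (\sum_(s <- orders n) (#|greedy s|%:R : R)) / (size (orders n))%:R.

(* Greedy covers every vertex of V_1 (an edge u_j v_j is either taken or blocked
   by an earlier edge ending at v_j), so it keeps at least n edges, while OPT has
   2n.  A matching of Z_n has at most n + min(p, q) edges, where p and q count its
   U_2V_2 and U_1V_1 edges, so greedy keeps more than n + 2h edges only if it keeps
   2h edges of each perfect matching.  Splitting these by arrival time, h edges of
   one kind arrive before h later edges of each kind, and each of the h^2 cross
   edges of U_2 x V_1 between the later ones must arrive after all of the first h,
   because it was blocked by an earlier kept edge at one of its endpoints.  For
   fixed sets this happens with probability h!(h^2)!/(h+h^2)! <= h^-h, and a union
   bound over the 2 * 8^n choices of sets makes it negligible for h = n/K. *)

From HB Require Import structures.
From mathcomp Require Import all_boot all_order all_algebra.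
From mathcomp Require Import zify.
Set Implicit Arguments. Unset Strict Implicit. Unset Printing Implicit Defensive.

Lemma count_allpairs_cons (T : Type) (a : pred (seq T)) (s : seq T)
    (f : T -> seq (seq T)) :
  count a [seq x :: t | x <- s, t <- f x] =
  \sum_(x <- s) count (fun t => a (x :: t)) (f x).
Proof.
elim: s => [|x s IH]; first by rewrite big_nil.
by rewrite /= count_cat IH big_cons count_map.
Qed.

Lemma fact_leq_expn k : k`! <= k ^ k.
Proof.
elim: k => // k IH; rewrite factS expnS leq_mul2l /=.
by apply: leq_trans IH _; case: k => // k; rewrite leq_exp2r.
Qed.

Lemma fact_mul_expn_leq m k : m`! * m ^ k <= (m + k)`!.
Proof.
elim: k => [|k IH]; first by rewrite muln1 addn0.
rewrite expnS addnS factS mulnCA.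
by apply: leq_mul => //; apply: leq_trans (leq_addr k m) (leqnSn _).
Qed.

Section PermutationsBefore.
Variables (T : eqType) (X Y : pred T).
Hypothesis disjXY : forall x, X x -> Y x -> false.

Fixpoint before (s : seq T) : bool :=
  if s is x :: t then
    if X x then before t else if Y x then ~~ has X t else before t
  else true.

Lemma big_ifXY_count (l : seq T) (p q r : nat) :
  \sum_(x <- l) (if X x then p else if Y x then q else r) =
  count X l * p + count Y l * q + count (predC (predU X Y)) l * r.
Proof.
elim: l => [|x l IH]; first by rewrite big_nil.
rewrite big_cons IH /=.
case: (boolP (X x)) => hX; case: (boolP (Y x)) => hY //=; try lia.
by have := disjXY hX hY.
Qed.

Lemma count_before_cons x t : uniq t ->
  count (fun s => before (x :: s)) (permutations t) =
  if X x then count before (permutations t)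
  else if Y x then ~~ has X t * (size t)`!
  else count before (permutations t).
Proof.
move=> ut /=; case: ifP => // _; case: ifP => // _.
rewrite (@eq_in_count _ _ (fun=> ~~ has X t)); last first.
  by move=> s; rewrite mem_permutations => /perm_has ->.
case: (has X t); first exact: count_pred0.
by rewrite mul1n (count_predT (permutations t)) size_permutations.
Qed.

Lemma count_before_permutations l : uniq l ->
  count before (permutations l) * (count X l + count Y l)`! =
  (size l)`! * (count X l)`! * (count Y l)`!.
Proof.
move e: (size l) => m; elim: m l e => [|m IH] l sl ul; first by case: l sl ul.
have l0 : 0 < size l by rewrite sl.
rewrite (permP (permutationsE l0)) (undup_id ul) count_allpairs_cons big_distrl.
set a := count X l; set b := count Y l; set c := count (predC (predU X Y)) l.
have abc : a + b + c = m.+1.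
  have := big_ifXY_count l 1 1 1; rewrite !muln1 => <-.
  by rewrite -sl -sum1_size; apply: eq_bigr => x _; case: ifP => //; case: ifP.
have term x : x \in l ->
    count (fun s => before (x :: s)) (permutations (rem x l)) * (a + b)`! =
    if X x then (a + b) * (m`! * a.-1`! * b`!)
    else if Y x then (a == 0) * (m`! * a`! * b`!) else m`! * a`! * b`!.
  move=> xl; have urem : uniq (rem x l) by rewrite rem_uniq.
  have := IH _ (etrans (size_rem xl) (congr1 predn sl)) urem.
  rewrite !count_rem xl /= count_before_cons // size_rem // sl /= -/a -/b.
  case: (boolP (X x)) => hX.
    have a0 : 0 < a by rewrite -has_count; apply/hasP; exists x.
    have nY : Y x = false by apply/negbTE/negP => /(disjXY hX).
    rewrite nY subn0 subn1 => <-.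
    by rewrite -(prednK a0) addSn factS /= mulnCA.
  case: (boolP (Y x)) => hY; rewrite !subn0 ?subn1 => IHx; last by rewrite IHx.
  rewrite has_count count_rem xl (negbTE hX) subn0 -/a.
  by case: (a) => [|a'] //=; rewrite add0n fact0; lia.
rewrite (eq_big_seq _ term) big_ifXY_count -/a -/b -/c factS -abc.
case: (posnP a) => a0; first by rewrite a0 /= fact0; lia.
by rewrite -(prednK a0) /= factS; lia.
Qed.

Lemma before_of_index_lt s : uniq s ->
  (forall x y, x \in s -> y \in s -> X x -> Y y -> index x s < index y s) ->
  before s.
Proof.
elim: s => [|z t IH] //= /andP[zt ut] lt_index.
have lt_index_t x y : x \in t -> y \in t -> X x -> Y y -> index x t < index y t.
  move=> xt yt hX hY.
  have zx : (z == x) = false by apply: contraNF zt => /eqP ->.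
  have zy : (z == y) = false by apply: contraNF zt => /eqP ->.
  by have := lt_index x y; rewrite !inE xt yt !orbT /= zx zy ltnS; apply.
case: ifP => hz; first exact: IH.
case: ifP => hY; last exact: IH.
apply/hasPn => x xt; apply/negP => hX.
by have := lt_index x z; rewrite !inE xt eqxx orbT => /(_ isT isT hX hY) /=; case: ifP.
Qed.

Lemma count_before_permutations_leq l : uniq l ->
  count before (permutations l) * (count Y l) ^ (count X l) <=
  (size l)`! * (count X l)`!.
Proof.
move=> ul; set a := count X l; set b := count Y l.
rewrite -(leq_pmul2r (fact_gt0 b)) -(count_before_permutations ul) -/a -/b.
by rewrite -mulnA leq_mul2l [_ * b`!]mulnC addnC fact_mul_expn_leq orbT.
Qed.

End PermutationsBefore.

Lemma count_leq_sum_count (T : eqType) (I : finType) (P : pred T) (C : pred I)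
    (Q : I -> pred T) (s : seq T) :
  (forall x, x \in s -> P x -> exists2 i, C i & Q i x) ->
  count P s <= \sum_(i | C i) count (Q i) s.
Proof.
elim: s => [|x s IH] cover //=; rewrite big_split /=; apply: leq_add; last first.
  by apply: IH => y ys; apply: cover; rewrite inE ys orbT.
case: (boolP (P x)) => // px; have [i ci qi] := cover x (mem_head _ _) px.
by rewrite (bigD1 i) //= qi leq_addr.
Qed.

Lemma sum_leq_const_count (T : eqType) (r : seq T) (f : T -> nat) (a : pred T) c d :
  (forall x, x \in r -> f x <= c + d * a x) ->
  \sum_(x <- r) f x <= size r * c + d * count a r.
Proof.
elim: r => [|x r IH] bound; rewrite ?big_nil ?big_cons //=.
have := bound x (mem_head _ _).
have := IH (fun y yr => bound y ltac:(by rewrite inE yr orbT)).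
lia.
Qed.

Lemma sum_geq_const (T : eqType) (r : seq T) (f : T -> nat) c :
  (forall x, x \in r -> c <= f x) -> size r * c <= \sum_(x <- r) f x.
Proof.
elim: r => [|x r IH] bound; rewrite ?big_nil ?big_cons //= mulSn.
by rewrite leq_add ?bound ?mem_head // IH // => y yr; rewrite bound // inE yr orbT.
Qed.

Lemma discrete_ivt (f : nat -> nat) h T :
  f 0 = 0 -> (forall t, f t.+1 <= (f t).+1) -> h <= f T -> exists t, f t = h.
Proof.
move=> f0 fS; elim: T => [|T IH] hT.
  by exists 0; move: hT; rewrite f0 leqn0 => /eqP.
case: (leqP h (f T)) => [/IH//|lt]; exists T.+1.
by apply/eqP; rewrite eqn_leq hT andbT; apply: leq_trans (fS T) _.
Qed.

Lemma subset_of_card (T : finType) (A : {set T}) h :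
  h <= #|A| -> exists2 S : {set T}, S \subset A & #|S| = h.
Proof.
case/card_geqP => s [us <- sA]; exists [set x in s].
  by apply/subsetP => x; rewrite inE => /sA.
by rewrite cardsE (card_uniqP us).
Qed.

Lemma split_at_threshold (I : finType) (A : {set I}) (pos : I -> nat) h :
  injective pos -> h <= #|A| -> exists t, #|A :&: [set i | pos i < t]| = h.
Proof.
move=> pos_inj hA; pose f t := #|A :&: [set i | pos i < t]|.
apply: (@discrete_ivt f h (\max_i (pos i).+1)).
- by apply/eqP; rewrite cards_eq0; apply/eqP/setP => i; rewrite !inE ltn0 andbF.
- move=> t; apply: leq_trans (subset_leq_card (_ : _ \subset
    (A :&: [set i | pos i < t]) :|: [set i | pos i == t])) _.
    apply/subsetP => i; rewrite !inE ltnS leq_eqVlt.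
    by case/andP=> -> /orP[]->; rewrite ?orbT.
  apply: leq_trans (leq_card_setU _ _) _; rewrite -addn1 leq_add2l.
  by apply/card_le1_eqP => i j; rewrite !inE => /eqP <- /eqP /pos_inj.
- apply: leq_trans hA (eq_leq (eq_card _)) => i; rewrite !inE.
  by rewrite (leq_bigmax (F := fun i => (pos i).+1) i) andbT.
Qed.

Section Greedy.
Variable n : nat.
Implicit Types (M : {set edge n}) (e f : edge n) (s : seq (edge n)).

Lemma greedy_step_subset M e : M \subset greedy_step M e.
Proof. by rewrite /greedy_step; case: ifP => // _; exact: subsetUr. Qed.

Lemma foldl_greedy_step_subset M s : M \subset foldl (@greedy_step n) M s.
Proof.
elim: s M => [|e s IH] M /=; first exact: subxx.
exact: subset_trans (greedy_step_subset M e) (IH _).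
Qed.

Lemma foldl_greedy_step_sub M s :
  foldl (@greedy_step n) M s \subset M :|: [set x in s].
Proof.
elim: s M => [|e s IH] M /=; first exact: subsetUl.
apply: subset_trans (IH _) _; apply/subsetP => x.
rewrite /greedy_step; case: ifP => _; rewrite !inE;
  by case: (x == e); case: (x \in M); case: (x \in s); rewrite ?orbT.
Qed.

Lemma matching_set0 : is_matching (set0 : {set edge n}).
Proof. by apply/forall_inP => e; rewrite inE. Qed.

Lemma foldl_greedy_step_matching M s :
  is_matching M -> is_matching (foldl (@greedy_step n) M s).
Proof.
by elim: s M => [|e s IH] M //= hM; apply: IH; rewrite /greedy_step; case: ifP.
Qed.

Lemma matching_inj_fst M : is_matching M -> {in M &, injective (fun e => e.1)}.
Proof.
move=> /forall_inP hM f g fM gM /= fg; apply/eqP/negPn/negP => neq.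
by have /forall_inP/(_ g gM) := hM f fM; rewrite neq fg eqxx.
Qed.

Lemma matching_inj_snd M : is_matching M -> {in M &, injective (fun e => e.2)}.
Proof.
move=> /forall_inP hM f g fM gM /= fg; apply/eqP/negPn/negP => neq.
by have /forall_inP/(_ g gM) := hM f fM; rewrite neq fg eqxx andbF.
Qed.

Lemma not_matching_setU1 M e : is_matching M -> ~~ is_matching (e |: M) ->
  exists2 f, f \in M & (f != e) && ((f.1 == e.1) || (f.2 == e.2)).
Proof.
move=> hM not_match.
case: (boolP [exists f in M, (f != e) && ((f.1 == e.1) || (f.2 == e.2))]).
  by case/exists_inP => f fM conflict; exists f.
move/exists_inPn => free; case/negP: not_match.
apply/forall_inP => x; rewrite !inE => /predU1P[->|xM];
  apply/forall_inP => y; rewrite !inE => /predU1P[->|yM]; apply/implyP => xy.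
- by rewrite eqxx in xy.
- have := free y yM; rewrite eq_sym xy /= negb_or.
  by rewrite ![e.1 == _]eq_sym ![e.2 == _]eq_sym.
- by have := free x xM; rewrite xy /= negb_or.
- exact: implyP (forall_inP (forall_inP hM x xM) y yM) xy.
Qed.

Lemma greedy_matching s : is_matching (greedy s).
Proof. exact/foldl_greedy_step_matching/matching_set0. Qed.

Lemma greedy_sub s : greedy s \subset [set x in s].
Proof. by apply: subset_trans (foldl_greedy_step_sub _ _) _; rewrite set0U. Qed.

Lemma greedy_blocked s e : uniq s -> e \in s -> e \notin greedy s ->
  exists2 f, f \in greedy s &
    [&& f != e, (f.1 == e.1) || (f.2 == e.2) & index f s < index e s].
Proof.
move=> us es; case/splitPr: es us => s1 s2 us.
have es1 : e \notin s1.
  by move: us; rewrite cat_uniq => /and3P[_ /hasPn/(_ e (mem_head _ _)) + _].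
rewrite /greedy foldl_cat /= => e_out.
have not_match : ~~ is_matching (e |: foldl (@greedy_step n) set0 s1).
  apply: contra e_out => e_match; apply: (subsetP (foldl_greedy_step_subset _ _)).
  by rewrite /greedy_step e_match setU11.
have [f fM /andP[fe conflict]] := not_matching_setU1 (greedy_matching s1) not_match.
exists f.
  exact: subsetP (foldl_greedy_step_subset _ _) _ (subsetP (greedy_step_subset _ e) _ fM).
have fs1 : f \in s1 by have := subsetP (greedy_sub s1) f fM; rewrite inE.
by rewrite fe conflict !index_cat fs1 (negbTE es1) /= eqxx addn0 index_mem.
Qed.

End Greedy.

Definition e11 {n} (j : 'I_n) : edge n := ((ord0, j), (ord0, j)).
Definition e22 {n} (i : 'I_n) : edge n := ((ord_max, i), (ord_max, i)).
Definition e21 {n} (i j : 'I_n) : edge n := ((ord_max, i), (ord0, j)).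

Definition side {n} (k : 'I_2) : {set vtx n} := [set (k, j) | j : 'I_n].

Definition matched11 {n} (M : {set edge n}) := [set j | e11 j \in M].
Definition matched22 {n} (M : {set edge n}) := [set i | e22 i \in M].

Section ThickZ.
Variable n : nat.
Implicit Types (M : {set edge n}) (e f : edge n) (s : seq (edge n)) (i j : 'I_n).

Lemma card_side k : #|side k : {set vtx n}| = n.
Proof. by rewrite card_imset ?card_ord // => i j []. Qed.

Lemma ord2_cases (a : 'I_2) : a = ord0 \/ a = ord_max.
Proof. by case: a => [[|[|]]] // p; [left | right]; apply: val_inj. Qed.

Lemma Zedge_e11 j : Zedge (e11 j). Proof. by rewrite /Zedge /= eqxx. Qed.
Lemma Zedge_e22 i : Zedge (e22 i). Proof. by rewrite /Zedge /= eqxx. Qed.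
Lemma Zedge_e21 i j : Zedge (e21 i j). Proof. by []. Qed.

Lemma e11_inj : injective (@e11 n). Proof. by move=> i j [->]. Qed.
Lemma e22_inj : injective (@e22 n). Proof. by move=> i j [->]. Qed.

Lemma ZedgeP e : Zedge e ->
  [\/ e = e11 e.1.2, e = e22 e.1.2 | e = e21 e.1.2 e.2.2].
Proof.
case: e => [[a i] [b j]]; rewrite /Zedge /=.
case: (ord2_cases a) => ->; case: (ord2_cases b) => -> /=; rewrite ?orbF ?andbF //.
- by move=> /eqP ->; constructor 1.
- by constructor 3.
- by move=> /eqP ->; constructor 2.
Qed.

Lemma Zedge_U1 e : Zedge e -> e.1.1 = ord0 -> e = e11 e.1.2.
Proof. by case/ZedgeP => ->. Qed.

Lemma Zedge_V2 e : Zedge e -> e.2.1 = ord_max -> e = e22 e.2.2.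
Proof. by case/ZedgeP => ->. Qed.

Lemma matching_card_leq22 M : is_matching M -> M \subset Zedges n ->
  #|M| <= n + #|matched22 M|.
Proof.
move=> hM MZ; rewrite -(card_in_imset (matching_inj_snd hM)).
apply: leq_trans (subset_leq_card (_ : _ \subset
  side ord0 :|: [set (ord_max, i) | i in matched22 M])) _.
  apply/subsetP => _ /imsetP[f fM ->].
  have fZ : Zedge f by have := subsetP MZ f fM; rewrite inE.
  rewrite inE [f.2]surjective_pairing; case: (ord2_cases f.2.1) => side_f.
    by apply/orP; left; apply/imsetP; exists f.2.2; rewrite // side_f.
  apply/orP; right; apply/imsetP; exists f.2.2; last by rewrite side_f.
  by rewrite inE -Zedge_V2.
apply: leq_trans (leq_card_setU _ _) _.
by rewrite card_side leq_add2l; apply: leq_imset_card.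
Qed.

Lemma matching_card_leq11 M : is_matching M -> M \subset Zedges n ->
  #|M| <= n + #|matched11 M|.
Proof.
move=> hM MZ; rewrite -(card_in_imset (matching_inj_fst hM)).
apply: leq_trans (subset_leq_card (_ : _ \subset
  side ord_max :|: [set (ord0, j) | j in matched11 M])) _.
  apply/subsetP => _ /imsetP[f fM ->].
  have fZ : Zedge f by have := subsetP MZ f fM; rewrite inE.
  rewrite inE [f.1]surjective_pairing; case: (ord2_cases f.1.1) => side_f.
    apply/orP; right; apply/imsetP; exists f.1.2; last by rewrite side_f.
    by rewrite inE -Zedge_U1.
  by apply/orP; left; apply/imsetP; exists f.1.2; rewrite // side_f.
apply: leq_trans (leq_card_setU _ _) _.
by rewrite card_side leq_add2l; apply: leq_imset_card.
Qed.

Lemma opt_size_Z : opt_size n = 2 * n.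
Proof.
apply/eqP; rewrite eqn_leq; apply/andP; split.
  apply/bigmax_leqP => M /andP[_ hM].
  apply: (@leq_trans #|[set: vtx n]|); last by rewrite cardsT card_prod !card_ord.
  by rewrite -(card_in_imset (matching_inj_fst hM)) subset_leq_card ?subsetT.
pose M0 := [set e11 j | j : 'I_n] :|: [set e22 i | i : 'I_n].
have disj : [disjoint [set e11 j | j : 'I_n] & [set e22 i | i : 'I_n]].
  by rewrite -setI_eq0; apply/eqP/setP => e; rewrite !inE;
    apply/negP => /andP[/imsetP[j _ ->] /imsetP[i _]].
have <- : #|M0| = 2 * n.
  by rewrite cardsU (disjoint_setI0 disj) cards0 !card_imset ?card_ord //;
    [lia | exact: e22_inj | exact: e11_inj].
apply: (leq_bigmax_cond M0); apply/andP; split.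
  by apply/subsetP => e; rewrite !inE => /orP[] /imsetP[i _ ->];
    rewrite ?Zedge_e11 ?Zedge_e22.
apply/forall_inP => f; rewrite inE => /orP[] /imsetP[i _ ->];
  apply/forall_inP => g; rewrite inE => /orP[] /imsetP[j _ ->];
  apply/implyP => ne //=; rewrite ?andbT //.
- by apply/andP; split; apply: contra ne => /eqP[->].
- by apply/andP; split; apply: contra ne => /eqP[->].
Qed.

Lemma uniq_orders s : s \in orders n -> uniq s.
Proof. by rewrite mem_permutations => /perm_uniq ->; exact: enum_uniq. Qed.

Lemma mem_orders s e : s \in orders n -> (e \in s) = Zedge e.
Proof. by rewrite mem_permutations => /perm_mem ->; rewrite mem_enum inE. Qed.

Lemma greedy_Zedges s : s \in orders n -> greedy s \subset Zedges n.
Proof.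
move=> so; apply/subsetP => x /(subsetP (greedy_sub s)).
by rewrite !inE (mem_orders _ so).
Qed.

Lemma greedy_covers_V1 s : s \in orders n -> side ord0 \subset [set f.2 | f in greedy s].
Proof.
move=> so; apply/subsetP => _ /imsetP[j _ ->].
case: (boolP (e11 j \in greedy s)) => jM; first by apply/imsetP; exists (e11 j).
have js : e11 j \in s by rewrite (mem_orders _ so) Zedge_e11.
have [f fM /and3P[fj conflict _]] := greedy_blocked (uniq_orders so) js jM.
apply/imsetP; exists f => //; case/orP: conflict => /eqP conflict //.
have fZ : Zedge f by have := subsetP (greedy_Zedges so) f fM; rewrite inE.
by move: fj; rewrite (Zedge_U1 fZ) ?conflict // eqxx.
Qed.

Lemma greedy_card_geq s : s \in orders n -> n <= #|greedy s|.
Proof.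
move=> so; rewrite -{1}(card_side ord0).
exact: leq_trans (subset_leq_card (greedy_covers_V1 so)) (leq_imset_card _ _).
Qed.

Lemma greedy_e21_blocked s i j : s \in orders n ->
  e22 i \in greedy s -> e11 j \in greedy s ->
  (index (e22 i) s < index (e21 i j) s) || (index (e11 j) s < index (e21 i j) s).
Proof.
move=> so iM jM; have hM := greedy_matching s.
have ijM : e21 i j \notin greedy s.
  by apply/negP => ijM; have := matching_inj_fst hM iM ijM erefl.
have ijs : e21 i j \in s by rewrite (mem_orders _ so).
have [f fM /and3P[_ conflict lt_f]] := greedy_blocked (uniq_orders so) ijs ijM.
case/orP: conflict => /eqP conflict.
  by rewrite -(matching_inj_fst hM fM iM conflict) lt_f.
by rewrite -(matching_inj_snd hM fM jM conflict) lt_f orbT.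
Qed.

End ThickZ.

Section Excessive.
Variable n : nat.
Implicit Types (M : {set edge n}) (s : seq (edge n)) (S : {set 'I_n}).

Definition side_edges (b : bool) S : {set edge n} :=
  if b then e22 @: S else e11 @: S.

Definition cross_edges S2 S3 : {set edge n} := [set e21 p.1 p.2 | p in setX S2 S3].

Definition excessive h s :=
  (2 * h <= #|matched22 (greedy s)|) && (2 * h <= #|matched11 (greedy s)|).

Lemma side_cross_disjoint b S1 S2 S3 e :
  e \in side_edges b S1 -> e \in cross_edges S2 S3 -> false.
Proof. by rewrite /side_edges; case: b => /imsetP[i _ ->] /imsetP[p _]. Qed.

Lemma excessive_before h s : s \in orders n -> excessive h s ->
  exists b S1 S2 S3, [/\ #|S1| = h, #|S2| = h, #|S3| = h &
    before [in side_edges b S1] [in cross_edges S2 S3] s].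
Proof.
move=> so /andP[h22 h11]; set M := greedy s in h22 h11.
have us := uniq_orders so.
pose pos22 i := index (e22 i) s; pose pos11 j := index (e11 j) s.
have in_s e : Zedge e -> e \in s by rewrite (mem_orders _ so).
have pos22_inj : injective pos22.
  move=> i k /(index_inj (e22 i) (in_s _ (Zedge_e22 i)) (in_s _ (Zedge_e22 k))).
  exact: e22_inj.
have pos11_inj : injective pos11.
  move=> i k /(index_inj (e11 i) (in_s _ (Zedge_e11 i)) (in_s _ (Zedge_e11 k))).
  exact: e11_inj.
have half k : 2 * h <= k -> h <= k by lia.
have [t22 early22] := split_at_threshold pos22_inj (half _ h22).
have [t11 early11] := split_at_threshold pos11_inj (half _ h11).
have late22 : h <= #|matched22 M :\: [set i | pos22 i < t22]|.
  by have := cardsID [set i | pos22 i < t22] (matched22 M); lia.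
have late11 : h <= #|matched11 M :\: [set j | pos11 j < t11]|.
  by have := cardsID [set j | pos11 j < t11] (matched11 M); lia.
have [S2 S2_late cS2] := subset_of_card late22.
have [S3 S3_late cS3] := subset_of_card late11.
have late_cross y : y \in cross_edges S2 S3 -> minn t22 t11 < index y s.
  case/imsetP => -[i j]; rewrite inE => /andP[/= iS2 jS3] ->.
  move: (subsetP S2_late i iS2) (subsetP S3_late j jS3).
  rewrite !inE -!leqNgt => /andP[le22 iM] /andP[le11 jM].
  rewrite gtn_min; case/orP: (greedy_e21_blocked so iM jM) => lt; apply/orP;
    [left; exact: leq_ltn_trans le22 lt | right; exact: leq_ltn_trans le11 lt].
case: (leqP t22 t11) => t_le.
  exists true, (matched22 M :&: [set i | pos22 i < t22]), S2, S3; split => //.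
  apply: before_of_index_lt us _ => x y _ _ /imsetP[i]; rewrite !inE => /andP[_ lt_i] ->.
  by move/late_cross; rewrite (minn_idPl t_le); apply: ltn_trans.
exists false, (matched11 M :&: [set j | pos11 j < t11]), S2, S3; split => //.
apply: before_of_index_lt us _ => x y _ _ /imsetP[j]; rewrite !inE => /andP[_ lt_j] ->.
by move/late_cross; rewrite (minn_idPr (ltnW t_le)); apply: ltn_trans.
Qed.

Lemma count_enum_Zedges (A : {set edge n}) :
  A \subset Zedges n -> count [in A] (enum (Zedges n)) = #|A|.
Proof.
move=> AZ; rewrite -size_filter -(card_uniqP (filter_uniq _ (enum_uniq _))).
apply: eq_card => x; rewrite mem_filter mem_enum /=.
by case: (boolP (x \in A)) => //= xA; rewrite (subsetP AZ).
Qed.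

Lemma card_side_edges b S : #|side_edges b S| = #|S|.
Proof. by case: b; rewrite card_imset //; [exact: e22_inj | exact: e11_inj]. Qed.

Lemma card_cross_edges S2 S3 : #|cross_edges S2 S3| = #|S2| * #|S3|.
Proof. by rewrite card_imset ?cardsX // => -[i j] [i' j'] /= [-> ->]. Qed.

Lemma side_edges_Zedges b S : side_edges b S \subset Zedges n.
Proof.
by case: b; apply/subsetP => _ /imsetP[i _ ->]; rewrite inE ?Zedge_e11 ?Zedge_e22.
Qed.

Lemma cross_edges_Zedges S2 S3 : cross_edges S2 S3 \subset Zedges n.
Proof. by apply/subsetP => _ /imsetP[p _ ->]; rewrite inE Zedge_e21. Qed.

Lemma count_orders_before_leq b S1 S2 S3 h :
  #|S1| = h -> #|S2| = h -> #|S3| = h ->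
  count (before [in side_edges b S1] [in cross_edges S2 S3]) (orders n) * h ^ h <=
  #|Zedges n|`!.
Proof.
move=> cS1 cS2 cS3.
have := count_before_permutations_leq (@side_cross_disjoint b S1 S2 S3)
  (enum_uniq (Zedges n)).
rewrite !count_enum_Zedges ?side_edges_Zedges ?cross_edges_Zedges //.
rewrite card_side_edges card_cross_edges cS1 cS2 cS3 -cardE expnMn => bound.
have hh_gt0 : 0 < h ^ h by rewrite expn_gt0; case: h {cS1 cS2 cS3 bound}.
rewrite -(leq_pmul2r hh_gt0) -mulnA; apply: leq_trans bound _.
by rewrite leq_mul2l fact_leq_expn orbT.
Qed.

Lemma count_excessive_leq h :
  count (excessive h) (orders n) * h ^ h <= 2 * 8 ^ n * #|Zedges n|`!.
Proof.
pose I := (bool * {set 'I_n} * {set 'I_n} * {set 'I_n})%type.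
pose C (q : I) := [&& #|q.1.1.2| == h, #|q.1.2| == h & #|q.2| == h].
pose Q (q : I) := before [in side_edges q.1.1.1 q.1.1.2] [in cross_edges q.1.2 q.2].
have union_bound :
    count (excessive h) (orders n) <= \sum_(q | C q) count (Q q) (orders n).
  apply: count_leq_sum_count => s so.
  case/(excessive_before so) => [b [S1 [S2 [S3 [c1 c2 c3 bf]]]]].
  by exists (b, S1, S2, S3); rewrite /C /= ?c1 ?c2 ?c3 ?eqxx.
apply: leq_trans (leq_mul union_bound (leqnn (h ^ h))) _.
rewrite big_distrl /=; apply: leq_trans (_ : \sum_(q : I) #|Zedges n|`! <= _).
  rewrite [X in _ <= X](bigID C) /=; apply: leq_trans (leq_addr _ _).
  by apply: leq_sum => q /and3P[/eqP c1 /eqP c2 /eqP c3]; exact: count_orders_before_leq.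
rewrite sum_nat_const /I !card_prod card_bool -cardsT -powersetT card_powerset.
rewrite cardsT card_ord.
by rewrite -[8]/(2 * 2 * 2) !expnMn !mulnA.
Qed.

Lemma greedy_card_leq_excessive h s : s \in orders n ->
  #|greedy s| <= n + 2 * h + n * excessive h s.
Proof.
move=> so; have hM := greedy_matching s; have MZ := greedy_Zedges so.
have := matching_card_leq22 hM MZ; have := matching_card_leq11 hM MZ.
have : #|matched22 (greedy s)| <= n by rewrite -[X in _ <= X]card_ord max_card.
rewrite /excessive; case: leqP; case: leqP => /=; lia.
Qed.

End Excessive.

Lemma size_orders n : size (orders n) = #|Zedges n|`!.
Proof. by rewrite size_permutations ?enum_uniq // -cardE. Qed.

Lemma sum_greedy_card_geq n : #|Zedges n|`! * n <= \sum_(s <- orders n) #|greedy s|.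
Proof. by rewrite -size_orders; apply: sum_geq_const => s; exact: greedy_card_geq. Qed.

Lemma sum_greedy_card_leq n h :
  (\sum_(s <- orders n) #|greedy s|) * h ^ h <=
  #|Zedges n|`! * ((n + 2 * h) * h ^ h + 2 * n * 8 ^ n).
Proof.
have := count_excessive_leq n h.
have := @sum_leq_const_count _ (orders n) (fun s => #|greedy s|) (excessive h)
  (n + 2 * h) n (@greedy_card_leq_excessive n h).
rewrite size_orders => sum_bound count_bound.
apply: leq_trans (leq_mul sum_bound (leqnn _)) _; rewrite mulnDl.
rewrite [X in _ <= X]mulnDr mulnA leq_add2l -mulnA.
apply: leq_trans (leq_mul (leqnn n) count_bound) _; lia.
Qed.

Lemma expn_leq_quotient_expn c K : 0 < c -> 0 < K ->
  exists m0, forall m, m0 <= m -> c ^ m * K <= (m %/ K) ^ (m %/ K).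
Proof.
(* h >= (2c)^(2K) and m <= 2Kh give c^m K <= (2c)^(2Kh) <= h^h. *)
move=> c0 K0; pose B := (c * 2) ^ (2 * K).
exists ((B + K) * K) => m le_m0m; set h := m %/ K.
have hB : B + K <= h by rewrite /h leq_divRL.
have hK : K <= h * K by rewrite leq_pmull //; lia.
have m_le : m <= 2 * K * h.
  by have := divn_eq m K; have := ltn_pmod m K0; rewrite -/h; lia.
apply: (@leq_trans (c ^ (2 * K * h) * 2 ^ (2 * K * h))).
  apply: leq_mul; first exact: leq_pexp2l.
  apply: ltnW; apply: leq_trans (ltn_expl K (isT : 1 < 2)) _.
  by apply: leq_pexp2l => //; lia.
rewrite -expnMn expnM -/B leq_exp2r; lia.
Qed.

Lemma sum_greedy_card_leq_eventually K : 0 < K -> exists m0, forall m, m0 <= m ->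
  (\sum_(s <- orders m) #|greedy s|) * K <= #|Zedges m|`! * m * (K + 4).
Proof.
move=> K0; have [m0 growth] := @expn_leq_quotient_expn 8 K isT K0.
exists m0 => m /growth; set h := m %/ K => exp_bound.
have hK : h * K <= m by rewrite leq_trunc_div.
have hh_gt0 : 0 < h ^ h by rewrite expn_gt0; case: h {hK exp_bound}.
rewrite -(leq_pmul2r hh_gt0) mulnAC.
apply: leq_trans (leq_mul (sum_greedy_card_leq m h) (leqnn K)) _.
rewrite -!mulnA leq_mul2l; apply/orP; right; set H := h ^ h.
have : 2 * m * 8 ^ m * K <= 2 * m * H by rewrite -mulnA leq_mul2l exp_bound orbT.
have : 2 * (h * K) * H <= 2 * m * H by rewrite leq_mul2r leq_mul2l hK !orbT.
lia.
Qed.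

(* Imported only now: classical_sets' [subsetP] etc. would shadow finset's above. *)
From mathcomp Require Import all_classical all_reals all_analysis.
From mathcomp Require Import ring.
Import Order.TTheory GRing.Theory Num.Theory numFieldNormedType.Exports.
Local Open Scope classical_set_scope.
Local Open Scope ring_scope.

Lemma cvg_of_eventually_leq (R : realType) (u : R^nat) (l c : R) : 0 <= c ->
  (forall n, l <= u n) ->
  (forall K : nat, (0 < K)%N ->
     exists N, forall n, (N <= n)%N -> u n <= l + c / K%:R) ->
  u @ \oo --> l.
Proof.
move=> c0 lower upper; apply/cvgrPdist_lt => eps eps0.
have [K K0 cK] : exists2 K : nat, (0 < K)%N & c / eps < K%:R.
  exists (Num.Def.archi_bound (c / eps)).+1 => //.
  by apply: lt_le_trans (archi_boundP _) _; rewrite ?ler_nat // divr_ge0 // ltW.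
have cKe : c / K%:R < eps.
  by rewrite ltr_pdivrMr ?ltr0n // mulrC -ltr_pdivrMr.
have [N bound] := upper K K0; exists N => // n /= le_Nn.
rewrite distrC ger0_norm ?subr_ge0 ?lower //.
by apply: le_lt_trans cKe; rewrite lerBlDl; exact: bound.
Qed.

Lemma ratio_geq_half (R : realType) (a b : nat) :
  (0 < b)%N -> (b <= a)%N -> 2^-1 <= a%:R / (2 * b)%:R :> R.
Proof.
move=> b0 ba; rewrite ler_pdivlMr ?ltr0n ?muln_gt0 // natrM mulrA mulVf //.
by rewrite mul1r ler_nat.
Qed.

Lemma ratio_leq_half_add (R : realType) (a b K : nat) :
  (0 < b)%N -> (0 < K)%N -> (a * K <= b * (K + 4))%N ->
  a%:R / (2 * b)%:R <= 2^-1 + 2 / K%:R :> R.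
Proof.
move=> b0 K0 aK; rewrite ler_pdivrMr ?ltr0n ?muln_gt0 //.
have -> : (2^-1 + 2 / K%:R) * (2 * b)%:R = (b * (K + 4))%:R / K%:R :> R.
  by rewrite !natrM natrD; field; rewrite pnatr_eq0 -lt0n.
by rewrite ler_pdivlMr ?ltr0n // -natrM ler_nat.
Qed.

Lemma expected_greedy_ratio (R : realType) n :
  expected_greedy R n / (opt_size n)%:R =
  (\sum_(s <- orders n) #|greedy s|)%:R / (2 * ((#|Zedges n|)`! * n))%:R.
Proof.
by rewrite /expected_greedy opt_size_Z -natr_sum size_orders -mulrA -invfM -natrM mulnCA.
Qed.

Theorem lemma10 (R : realType) :
  (fun n : nat => expected_greedy R n.+1 / (opt_size n.+1)%:R) @ \oo --> (2^-1 : R).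
Proof.
apply: (@cvg_of_eventually_leq _ _ _ 2) => // [n|K K0].
  rewrite expected_greedy_ratio; apply: ratio_geq_half; last exact: sum_greedy_card_geq.
  by rewrite muln_gt0 fact_gt0.
have [m0 bound] := sum_greedy_card_leq_eventually K0.
exists m0 => n le_m0n; rewrite expected_greedy_ratio.
apply: ratio_leq_half_add => //; first by rewrite muln_gt0 fact_gt0.
exact/bound/(leq_trans le_m0n).
Qed.
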